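(* For every integer $k\ge 2$, \[u(2^k-1-k,\;2^k-1)=\varepsilon(2^k-1-k,\;2^k-1)=2^{k-1}.\]
   Context: All matrices are binary (entries in $\{0,1\}$). For a nonempty set $S$ of columns of a binary matrix, let $z$ be the sum over the integers of the columns in $S$. $S$ is called $1$-free if no entry of $z$ equals $1$, and even if all entries of $z$ are even. For a binary $m\times n$ matrix $A$ with $m<n$: $\varepsilon(A)$ is the smallest cardinality of a nonempty even set of columns of $A$ (the minimum distance of the code $\{x\in\mathbb F_2^n: Ax=0\}$), and $u(A)$ (the stopping distance) is the smallest cardinality of a nonempty $1$-free set of columns of $A$. For $m<n$, $\varepsilon(m,n)$ and $u(m,n)$ denote the maxima of $\varepsilon(A)$, resp. $u(A)$, over all binary $m\times n$ matrices $A$. *)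

(* Binary matrices are 'M[bool]_(m, n); entries coerce to 0/1 in nat. *)
From mathcomp Require Import all_boot all_algebra.
Set Implicit Arguments. Unset Strict Implicit. Unset Printing Implicit Defensive.

Definition colsum (m n : nat) (A : 'M[bool]_(m, n)) (S : {set 'I_n}) (i : 'I_m) : nat :=
  \sum_(j in S) (A i j : nat).

Definition one_free (m n : nat) (A : 'M[bool]_(m, n)) (S : {set 'I_n}) : bool :=
  [forall i, colsum A S i != 1%N].

Definition even_set (m n : nat) (A : 'M[bool]_(m, n)) (S : {set 'I_n}) : bool :=
  [forall i, ~~ odd (colsum A S i)].

(* smallest cardinality of a nonempty even set (default n.+1 if none; never
   used when m < n, since then a nonempty even set exists) *)
Definition eps (m n : nat) (A : 'M[bool]_(m, n)) : nat :=
  \big[minn/n.+1]_(S : {set 'I_n} | (S != set0) && even_set A S) #|S|.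

Definition stopdist (m n : nat) (A : 'M[bool]_(m, n)) : nat :=
  \big[minn/n.+1]_(S : {set 'I_n} | (S != set0) && one_free A S) #|S|.

Definition eps_mn (m n : nat) : nat := \max_(A : 'M[bool]_(m, n)) eps A.
Definition u_mn (m n : nat) : nat := \max_(A : 'M[bool]_(m, n)) stopdist A.

From HB Require Import structures.
From mathcomp Require Import all_boot all_algebra zify.
Set Implicit Arguments. Unset Strict Implicit. Unset Printing Implicit Defensive.

(* The even sets of an m x n matrix form a linear code (closed
   under symmetric difference) with at least 2 ^ (n - m) words, and each column
   lies in at most half of them.  Summing the weights gives the Plotkin bound
   2 eps (|C| - 1) <= n |C|, hence eps <= 2 ^ (k - 1) when n = 2 ^ k - 1 and
   m = n - k; and stopdist <= eps because even sets are 1-free.  Label the columns 1, ..., 2 ^ k - 1 and put one row on each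
   triple {2 ^ p + x, 2 ^ p, x} with 0 < x < 2 ^ p; there are exactly
   2 ^ k - 1 - k of them.  A 1-free set of labels below 2 ^ (p + 1) either
   contains 2 ^ p, and then meets every pair {x, 2 ^ p + x}, or avoids it, and
   then is invariant under x <-> 2 ^ p + x; by induction on p a nonempty one
   has at least 2 ^ p elements. *)

(* Gives [\big[minn/x]] (whose index [x] is no unit) the AC lemmas of bigop,
   such as [bigD1]. *)
HB.instance Definition _ := SemiGroup.isComLaw.Build nat minn minnA minnC.

Lemma bigmin_leq (I : finType) (P : pred I) (F : I -> nat) x i0 :
  P i0 -> \big[minn/x]_(i | P i) F i <= F i0.
Proof. by move=> Pi0; rewrite (bigD1 i0) // geq_minl. Qed.

Lemma bigmin_leq_idx (I : finType) (P : pred I) (F : I -> nat) x :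
  \big[minn/x]_(i | P i) F i <= x.
Proof. by elim/big_rec: _ => // i y _ yx; rewrite geq_min yx orbT. Qed.

Lemma leq_bigmin (I : finType) (P : pred I) (F : I -> nat) x d :
  d <= x -> (forall i, P i -> d <= F i) -> d <= \big[minn/x]_(i | P i) F i.
Proof. by move=> dx dF; elim/big_ind: _ => // y z dy dz; rewrite leq_min dy. Qed.

Definition symdiff (T : finType) (S R : {set T}) := [set j | (j \in S) (+) (j \in R)].

Lemma symdiffK (T : finType) (R : {set T}) : involutive (fun S => symdiff S R).
Proof. by move=> S; apply/setP => j; rewrite !inE addbK. Qed.

Section EvenSets.

Variables (m n : nat) (A : 'M[bool]_(m, n)).

Definition even_sets := [set S | even_set A S].

Lemma even_set0 : even_set A set0.
Proof. by apply/forallP => i; rewrite /colsum big_set0. Qed.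

Lemma odd_colsum_symdiff S R i :
  odd (colsum A (symdiff S R) i) = odd (colsum A S i) (+) odd (colsum A R i).
Proof.
have split_sums : colsum A S i + colsum A R i
    = colsum A (symdiff S R) i + 2 * colsum A (S :&: R) i.
  rewrite /colsum big_distrr /= [\sum_(j in S) _]big_mkcond [\sum_(j in R) _]big_mkcond.
  rewrite [\sum_(j in symdiff S R) _]big_mkcond [\sum_(j in S :&: R) _]big_mkcond -!big_split /=.
  apply: eq_bigr => j _; rewrite !inE.
  by case: (j \in S); case: (j \in R); rewrite /= ?add0n ?addn0 ?mul2n ?addnn.
by rewrite -oddD split_sums oddD oddM andFb addbF.
Qed.

Lemma even_set_symdiff S R :
  even_set A S -> even_set A R -> even_set A (symdiff S R).
Proof.
move=> /forallP evS /forallP evR; apply/forallP => i.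
by rewrite odd_colsum_symdiff (negbTE (evS i)) (negbTE (evR i)).
Qed.

Definition syndrome (S : {set 'I_n}) := [set i | odd (colsum A S i)].

(* A set is determined by its syndrome and by its symmetric difference with a
   fixed set of the same syndrome, and that difference is even. *)
Lemma card_even_sets : 2 ^ n <= 2 ^ m * #|even_sets|.
Proof.
pose rep y := odflt set0 [pick S | syndrome S == y].
pose code S := (syndrome S, symdiff S (rep (syndrome S))).
have code_inj : injective code.
  move=> S1 S2 [eq_syn]; rewrite eq_syn => eq_diff.
  by rewrite -[S1](symdiffK (rep (syndrome S2))) eq_diff symdiffK.
have code_sub : code @: setT \subset setX [set: {set 'I_m}] even_sets.
  apply/subsetP => _ /imsetP[S _ ->]; rewrite !inE /= /rep.
  case: pickP => [R /eqP synR | /(_ S)]; last by rewrite eqxx.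
  apply/forallP => i; rewrite odd_colsum_symdiff.
  by have /setP/(_ i) := synR; rewrite !inE => ->; rewrite addbb.
have := subset_leq_card code_sub; rewrite card_imset // cardsX.
by rewrite -!powersetT !card_powerset !cardsT !card_ord.
Qed.

Lemma card_even_sets_mem j :
  2 * #|[set S in even_sets | j \in S]| <= #|even_sets|.
Proof.
set C := even_sets; set B := [set S : {set 'I_n} | j \in S].
have -> : [set S in C | j \in S] = C :&: B by apply/setP => S; rewrite !inE.
rewrite -[X in _ <= X](cardsID B C).
suff : #|C :&: B| <= #|C :\: B| by lia.
have [->|[T]] := set_0Vmem (C :&: B); first by rewrite cards0.
rewrite !inE => /andP[evT jT].
rewrite -(card_imset _ (can_inj (symdiffK T))).
apply/subset_leq_card/subsetP => _ /imsetP[S + ->].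
by rewrite !inE => /andP[evS jS]; rewrite jS jT even_set_symdiff.
Qed.

Lemma sum_card_even_sets :
  2 * \sum_(S in even_sets) #|S| <= n * #|even_sets|.
Proof.
set C := even_sets.
have -> : \sum_(S in C) #|S| = \sum_(j < n) #|[set S in C | j \in S]|.
  under eq_bigr do rewrite -sum1_card.
  rewrite (exchange_big_dep predT) //=; apply: eq_bigr => j _.
  by rewrite -sum1_card; apply: eq_bigl => S; rewrite inE.
rewrite big_distrr /=.
apply: (@leq_trans (\sum_(j < n) #|C|)).
  by apply: leq_sum => j _; apply: card_even_sets_mem.
by rewrite sum_nat_const card_ord.
Qed.

Lemma eps_leq_card S : S != set0 -> even_set A S -> eps A <= #|S|.
Proof. by move=> nzS evS; apply: bigmin_leq; rewrite nzS evS. Qed.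

Lemma plotkin_bound : 2 * eps A * (#|even_sets| - 1) <= n * #|even_sets|.
Proof.
have ev0 : set0 \in even_sets by rewrite inE even_set0.
apply: leq_trans (sum_card_even_sets); rewrite -mulnA leq_mul2l /=.
rewrite (big_setD1 _ ev0) /=; apply: leq_trans (leq_addl _ _).
rewrite [in X in _ * (X - 1)](cardsD1 set0) ev0 add1n subn1 /=.
rewrite mulnC -sum_nat_const; apply: leq_sum => S; rewrite !inE => /andP[nzS evS].
exact: eps_leq_card.
Qed.

Lemma stopdist_leq_eps : stopdist A <= eps A.
Proof.
apply: leq_bigmin => [|S /andP[nzS /forallP evS]]; first exact: bigmin_leq_idx.
apply: bigmin_leq; rewrite nzS; apply/forallP => i.
by apply: contra (evS i) => /eqP ->.
Qed.

End EvenSets.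

Lemma plotkin_numeric e d N :
  0 < e -> 2 * e <= N -> 2 * d * (N - 1) <= (2 * e - 1) * N -> d <= e.
Proof.
move=> e_gt0 N_ge plotkin; rewrite leqNgt; apply/negP => lt_ed.
have : e.+1 * (N - 1) <= d * (N - 1) by apply: leq_mul.
nia.
Qed.

Lemma eps_leq_hamming k (A : 'M[bool]_(2 ^ k - 1 - k, 2 ^ k - 1)) :
  0 < k -> eps A <= 2 ^ k.-1.
Proof.
move=> k_gt0; have pow_k : 2 * 2 ^ k.-1 = 2 ^ k by rewrite -expnS prednK.
apply: (@plotkin_numeric _ _ #|even_sets A|); first by rewrite expn_gt0.
  have := card_even_sets A; have := ltn_expl k (isT : 1 < 2) => lt_k.
  rewrite -{1}(subnK (_ : k <= 2 ^ k - 1)) ?pow_k; last by lia.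
  by rewrite expnD leq_pmul2l ?expn_gt0.
by rewrite pow_k; apply: plotkin_bound.
Qed.

Lemma sum3_neq1 (b c d : bool) : (b + c + d != 1) = (if c then b || d else b == d).
Proof. by case: b; case: c; case: d. Qed.

Definition triple_one_free k (P : pred nat) :=
  forall p x, p < k -> 0 < x < 2 ^ p -> P (2 ^ p + x) + P (2 ^ p) + P x != 1.

Lemma triple_one_free_sum k (P : pred nat) :
  ~~ P 0 -> triple_one_free k P -> (exists2 v, v < 2 ^ k & P v) ->
  2 ^ k <= 2 * \sum_(0 <= v < 2 ^ k) P v.
Proof.
move=> P0; elim: k => [|k IH] freeP [v lt_v Pv].
  by move: lt_v Pv; rewrite expn0 ltnS leqn0 => /eqP ->; rewrite (negbTE P0).
have upper_half i : i < 2 ^ k ->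
    if P (2 ^ k) then P (i + 2 ^ k) || P i else P (i + 2 ^ k) == P i.
  rewrite addnC; case: (posnP i) => [-> _ | i_gt0 lt_i].
    by rewrite addn0; case: ifP => ->; rewrite ?(negbTE P0).
  by rewrite -sum3_neq1; apply: freeP; rewrite ?i_gt0.
rewrite expnS mul2n -addnn in lt_v *.
rewrite (big_cat_nat _ (leq_addr _ _)) //=.
rewrite -{4}[2 ^ k]add0n big_addn addnK.
case P2: (P (2 ^ k)).
- have cover : 2 ^ k <= \sum_(0 <= i < 2 ^ k) P i + \sum_(0 <= i < 2 ^ k) P (i + 2 ^ k).
    rewrite -big_split /= -{1}[2 ^ k]subn0 -[_ - 0]muln1 -sum_nat_const_nat.
    rewrite big_nat [X in _ <= X]big_nat; apply: leq_sum => i /= lt_i.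
    by have := upper_half i lt_i; rewrite P2 => /orP[] ->; rewrite ?addn1 ?add1n.
  lia.
- have mirror : \sum_(0 <= i < 2 ^ k) P (i + 2 ^ k) = \sum_(0 <= i < 2 ^ k) P i.
    by apply: eq_big_nat => i /= lt_i; have := upper_half i lt_i; rewrite P2 => /eqP ->.
  rewrite mirror; suff : 2 ^ k <= 2 * \sum_(0 <= i < 2 ^ k) P i by lia.
  apply: IH => [p x lt_pk | ]; first by apply: freeP; apply: ltnW.
  have [lt_vk | le_kv] := ltnP v (2 ^ k); first by exists v.
  exists (v - 2 ^ k); first lia.
  by have := upper_half (v - 2 ^ k) ltac:(lia); rewrite P2 subnK // Pv eq_sym => /eqP.
Qed.

Lemma pow2_subn_mono a b : a <= b -> 2 ^ a - a <= 2 ^ b - b.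
Proof.
elim: b => [|b IH]; first by rewrite leqn0 => /eqP ->.
rewrite leq_eqVlt => /orP[/eqP -> // | /IH le_ab].
by have := ltn_expl b (isT : 1 < 2); rewrite expnS; lia.
Qed.

(* [triple_row p x] is the number of non-powers of 2 in [1, 2 ^ p + x), so
   these rows are exactly the [2 ^ k - 1 - k] non-powers of 2 in (2, 2 ^ k). *)
Definition triple_row p x := 2 ^ p - p + x - 2.

Lemma triple_row_lt k p x : p < k -> 0 < x < 2 ^ p -> triple_row p x < 2 ^ k - 1 - k.
Proof.
move=> lt_pk lt_x; have := pow2_subn_mono lt_pk; have := ltn_expl p (isT : 1 < 2).
rewrite /triple_row expnS; lia.
Qed.

Lemma triple_row_inj p q x y : 0 < x < 2 ^ p -> 0 < y < 2 ^ q ->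
  triple_row p x = triple_row q y -> p = q /\ x = y.
Proof.
have ne_lt p' q' x' y' : p' < q' -> 0 < x' < 2 ^ p' -> 0 < y' < 2 ^ q' ->
    triple_row p' x' != triple_row q' y'.
  move=> lt_pq lt_x lt_y; have := pow2_subn_mono lt_pq.
  have := ltn_expl p' (isT : 1 < 2); have := ltn_expl q' (isT : 1 < 2).
  rewrite /triple_row expnS; lia.
move=> lt_x lt_y eq_row; case: (ltngtP p q) => [lt_pq | lt_qp | eq_pq].
- by have := ne_lt _ _ _ _ lt_pq lt_x lt_y; rewrite eq_row eqxx.
- by have := ne_lt _ _ _ _ lt_qp lt_y lt_x; rewrite eq_row eqxx.
- by move: eq_row; rewrite /triple_row eq_pq; have := ltn_expl q (isT : 1 < 2); lia.
Qed.

Definition in_triple p x v := (v == 2 ^ p + x) || (v == 2 ^ p) || (v == x).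

(* Column [j] stands for the integer [j + 1]; row [triple_row p x] is the
   indicator of the triple [{2 ^ p + x, 2 ^ p, x}]. *)
Definition triple_mx k : 'M[bool]_(2 ^ k - 1 - k, 2 ^ k - 1) :=
  \matrix_(i, j) [exists p : 'I_k, exists x : 'I_(2 ^ k),
    [&& 0 < x < 2 ^ p, triple_row p x == i & in_triple p x j.+1]].

Lemma triple_mxE k p x (i : 'I_(2 ^ k - 1 - k)) (j : 'I_(2 ^ k - 1)) :
  p < k -> 0 < x < 2 ^ p -> triple_row p x = i ->
  triple_mx k i j = in_triple p x j.+1.
Proof.
move=> lt_pk lt_x row_i; rewrite mxE; apply/existsP/idP => [[p' /existsP[x']] | trij].
  case/and3P=> lt_x' /eqP row_i' trij.
  by have [<- <-] := triple_row_inj lt_x' lt_x (etrans row_i' (esym row_i)).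
have lt_xk : x < 2 ^ k.
  by apply: leq_trans (_ : 2 ^ p <= _); [case/andP: lt_x | rewrite leq_exp2l // ltnW].
exists (Ordinal lt_pk); apply/existsP; exists (Ordinal lt_xk).
by rewrite /= lt_x row_i eqxx trij.
Qed.

Definition labels n (S : {set 'I_n}) : pred nat :=
  fun v => [exists j in S, (j : nat).+1 == v].

Lemma labels0 n (S : {set 'I_n}) : ~~ labels S 0.
Proof. by apply/existsP => -[j /andP[]]. Qed.

Lemma labelsS n (S : {set 'I_n}) (j : 'I_n) : labels S j.+1 = (j \in S).
Proof.
apply/existsP/idP => [[j' /andP[j'S /eqP [eq_j]]] | jS]; last by exists j; rewrite jS /=.
by rewrite (_ : j = j') //; apply: val_inj.
Qed.

Lemma sum_eq_labels n (S : {set 'I_n}) v :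
  \sum_(j in S) ((j : nat).+1 == v : nat) = labels S v.
Proof.
case: (boolP (labels S v)) => [/existsP[j0 /andP[j0S /eqP <-]] | nSv].
  rewrite (bigD1 j0) //= eqxx big1 // => j /andP[_ ne_j].
  by apply/eqP; rewrite eqb0 eqSS; apply: contra ne_j => /eqP/val_inj ->.
rewrite big1 // => j jS; apply/eqP; rewrite eqb0; apply: contra nSv => /eqP <-.
by rewrite labelsS.
Qed.

Lemma sum_labels n (S : {set 'I_n}) : \sum_(0 <= v < n.+1) labels S v = #|S|.
Proof.
rewrite big_nat_recl // (negbTE (labels0 S)) add0n big_mkord.
by rewrite -sum1_card [RHS]big_mkcond; apply: eq_bigr => j _; rewrite labelsS; case: (j \in S).
Qed.

Lemma colsum_triple_mx k (S : {set 'I_(2 ^ k - 1)}) p x (i : 'I_(2 ^ k - 1 - k)) :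
  p < k -> 0 < x < 2 ^ p -> triple_row p x = i ->
  colsum (triple_mx k) S i = labels S (2 ^ p + x) + labels S (2 ^ p) + labels S x.
Proof.
move=> lt_pk lt_x row_i; rewrite -!sum_eq_labels -!big_split /=.
apply: eq_bigr => j _; rewrite (triple_mxE _ lt_pk lt_x row_i) /in_triple.
by case/andP: lt_x => x_gt0 lt_x; do 3 case: eqP => ? //=; lia.
Qed.

Lemma triple_mx_card k (S : {set 'I_(2 ^ k - 1)}) :
  S != set0 -> one_free (triple_mx k) S -> 2 ^ k <= 2 * #|S|.
Proof.
move=> nzS /forallP freeS; have k_gt0 : 0 < 2 ^ k by rewrite expn_gt0.
rewrite -sum_labels (_ : (2 ^ k - 1).+1 = 2 ^ k); last by lia.
apply: triple_one_free_sum (labels0 S) _ _.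
  move=> p x lt_pk lt_x; have lt_row := triple_row_lt lt_pk lt_x.
  by rewrite -(colsum_triple_mx S lt_pk lt_x (erefl : _ = Ordinal lt_row :> nat)).
have [/eqP S0 | [j jS]] := set_0Vmem S; first by rewrite S0 in nzS.
by exists j.+1; [have := ltn_ord j; lia | rewrite labelsS].
Qed.

Lemma stopdist_triple_mx k : 2 ^ k.-1 <= stopdist (triple_mx k).
Proof.
have half d : 2 ^ k <= 2 * d -> 2 ^ k.-1 <= d by case: k => [|k] /=; rewrite ?expn0 ?expnS; lia.
apply: leq_bigmin => [|S /andP[nzS freeS]]; first by apply: half; lia.
exact/half/triple_mx_card.
Qed.

Theorem theorem6p1 (k : nat) (hk : 2 <= k) :
  u_mn (2 ^ k - 1 - k) (2 ^ k - 1) = 2 ^ k.-1 /\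
  eps_mn (2 ^ k - 1 - k) (2 ^ k - 1) = 2 ^ k.-1.
Proof.
have eps_le (A : 'M[bool]_(2 ^ k - 1 - k, 2 ^ k - 1)) : eps A <= 2 ^ k.-1.
  by apply: eps_leq_hamming; lia.
have triple_ge := stopdist_triple_mx k.
split; apply/eqP; rewrite eqn_leq; apply/andP; split.
- by apply/bigmax_leqP => A _; apply: leq_trans (stopdist_leq_eps A) (eps_le A).
- exact: leq_trans triple_ge (leq_bigmax (triple_mx k)).
- by apply/bigmax_leqP => A _; apply: eps_le.
- apply: leq_trans (leq_bigmax (triple_mx k)).
  exact: leq_trans triple_ge (stopdist_leq_eps _).
Qed.
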